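(* Let $\ell\ge2$ and $k\ge0$ be integers, and let $\lambda$ be an $\ell$-core with $\lambda_1=k$. Write $\mathbf{a}=(a_1,\ldots,a_\ell)=\pi_\ell^{-1}(\lambda)$ and let $(k\bmod\ell)$ denote the unique integer in $\{1,\ldots,\ell\}$ congruent to $k$ modulo $\ell$. Then \[ a_{(k\bmod\ell)}=\left\lceil \frac{k}{\ell}\right\rceil, \] i.e. $\pi_\ell^{-1}(\lambda)$ lies in the affine hyperplane $H_\ell^k=\{\mathbf{a}\in\mathbf{R}^\ell:\sum_j a_j=0,\ a_{(k\bmod\ell)}=\lceil k/\ell\rceil\}$.
   Context: A partition is an $\ell$-core if none of its hook lengths is divisible by $\ell$ (the hook length of a box is the number of boxes weakly to its right in its row plus the number strictly below it in its column). For $\mathbf{a}\in\mathbf{Z}^\ell$ with $\sum a_j=0$, let $X(\mathbf{a})=\{r\ell+(j-1):1\le j\le\ell,\ r\in\mathbf{Z},\ r\le a_j\}$ and let $\pi_\ell(\mathbf{a})$ be the partition whose nonzero parts are the positive values of $\#\{y\in\mathbf{Z}\setminus X(\mathbf{a}):y<x\}$, $x\in X(\mathbf{a})$. It is known that $\pi_\ell$ is a bijection from $\{\mathbf{a}\in\mathbf{Z}^\ell:\sum a_j=0\}$ onto the set of $\ell$-cores. $\lambda_1$ is the largest part ($0$ for the empty partition). *)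

From mathcomp Require Import all_boot all_order all_algebra.
Set Implicit Arguments. Unset Strict Implicit. Unset Printing Implicit Defensive.
Import Order.TTheory GRing.Theory Num.Theory.
Local Open Scope ring_scope.

Definition is_partition (lam : seq nat) : bool :=
  sorted geq lam && all (fun p => (0 < p)%N) lam.

Definition largest_part (lam : seq nat) : nat := nth 0%N lam 0.

(* Hook length of the box in row i, column j (0-indexed):
   boxes weakly to its right in its row, plus boxes strictly below it in its column. *)
Definition hook_length (lam : seq nat) (i j : nat) : nat :=
  (nth 0%N lam i - j) + (count (fun p => (j < p)%N) lam - i.+1).

Definition is_box (lam : seq nat) (i j : nat) : bool :=
  (i < size lam)%N && (j < nth 0%N lam i)%N.

Definition is_core (l : nat) (lam : seq nat) : bool :=
  all (fun i => all (fun j => ~~ (l %| hook_length lam i j)%N)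
                    (iota 0 (nth 0%N lam i))) (iota 0 (size lam)).

(* X(a) for a = (a_1,...,a_l), stored 0-indexed: a j = a_{j+1} for j : 'I_l.
   y \in X(a) iff y = r*l + j (0 <= j < l, i.e. j = (index) - 1) with r <= a j. *)
Definition inX (l : nat) (a : 'I_l -> int) (y : int) : bool :=
  [exists j : 'I_l, (((y - j%:Z) %% l%:Z)%Z == 0) && (((y - j%:Z) %/ l%:Z)%Z <= a j)].

(* A window of integers outside of which nothing relevant happens:
   with B = 1 + sum |a_j|, every y < -B*l lies in X(a), and no y >= B*l does. *)
Definition bound (l : nat) (a : 'I_l -> int) : nat := (\sum_(j < l) `|a j|).+1.

Definition window (l : nat) (a : 'I_l -> int) : seq int :=
  [seq (i%:Z - (bound a * l)%:Z) | i <- iota 0 (2 * bound a * l)].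

(* #{ y in Z \ X(a) : y < x } (the y below the window are all in X(a)). *)
Definition gaps_below (l : nat) (a : 'I_l -> int) (x : int) : nat :=
  count (fun y => (y < x) && ~~ inX a y) (window a).

Definition pi_l (l : nat) (a : 'I_l -> int) : seq nat :=
  sort geq [seq n <- [seq gaps_below a x | x <- window a & inX a x] | (0 < n)%N].

Definition ceil_div (k l : nat) : nat := (k + l.-1) %/ l.

From mathcomp Require Import all_boot all_order all_algebra zify.
Set Implicit Arguments. Unset Strict Implicit. Unset Printing Implicit Defensive.
Import Order.TTheory GRing.Theory Num.Theory.
Local Open Scope ring_scope.

(* The largest part of pi_l(a) is the number of gaps below the largest element
   m = a_J l + J of X(a). Counting them residue class by residue class, the
   class of i contains the a_J - a_i - [J < i] values r l + i with a_i < r and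
   r l + i < m; summing over i and using sum_i a_i = 0 gives
   lambda_1 = l a_J - (l - 1 - J), that is k + l - 1 = l a_J + J. Hence J is the
   0-indexed position (k mod l) and a_J = ceil(k / l). *)

Lemma count_iotaSr (p : pred nat) (m n : nat) :
  count p (iota m n.+1) = (count p (iota m n) + p (m + n)%N)%N.
Proof. by rewrite -addn1 iotaD count_cat /= addn0. Qed.

Lemma count_iota_sum (p : pred nat) (m n : nat) :
  count p (iota m n) = (\sum_(i < n) p (m + i)%N)%N.
Proof.
elim: n => [|n IHn]; first by rewrite big_ord0.
by rewrite big_ord_recr count_iotaSr IHn.
Qed.

Lemma count_iota_mul (p : pred nat) (N l : nat) :
  count p (iota 0 (N * l)) =
  (\sum_(i < l) count (fun r => p (r * l + i)%N) (iota 0 N))%N.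
Proof.
elim: N => [|N IHN]; first by rewrite mul0n big1.
rewrite mulSnr iotaD count_cat IHN count_iota_sum add0n -big_split.
by apply: eq_bigr => i _; rewrite count_iotaSr.
Qed.

Lemma count_iota_itv (lo hi N : nat) :
  count (fun r => (lo < r <= hi)%N) (iota 0 N) = (minn hi.+1 N - minn lo.+1 N)%N.
Proof.
elim: N => [|N IHN]; first by rewrite !minn0.
rewrite count_iotaSr IHN /=.
case: ((lo < N)%N && (N <= hi)%N) /andP => /=; lia.
Qed.

Lemma sum_ord_gt (J n : nat) : (\sum_(i < n) (J < i)%N)%N = (n - J.+1)%N.
Proof.
elim: n => [|n IHn]; first by rewrite big_ord0.
by rewrite big_ord_recr /= IHn; case: (ltnP J n) => /=; lia.
Qed.

Lemma head_sorted_geq (s : seq nat) :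
  sorted geq s -> nth 0%N s 0 = (\max_(n <- s) n)%N.
Proof.
case: s => [|h t] /= srt; first by rewrite big_nil.
rewrite big_cons; apply/esym/maxn_idPl/bigmax_leqP_seq => x xt _.
have geq_trans : transitive geq by move=> ? ? ? /= yx zy; apply: leq_trans zy yx.
by have /allP := order_path_min geq_trans srt; apply.
Qed.

Lemma head_sort_geq_pos (s : seq nat) :
  nth 0%N (sort geq [seq n <- s | (0 < n)%N]) 0 = (\max_(n <- s) n)%N.
Proof.
rewrite head_sorted_geq; last by apply: sort_sorted => x y; apply: leq_total.
rewrite (perm_big _ (permEl (perm_sort _ _))) big_filter big_mkcond /=.
by apply: eq_bigr => n _; case: posnP.
Qed.

Lemma ltz_mulD (x y : int) (l i j : nat) : (i < l)%N -> (j < l)%N ->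
  (x * l%:Z + i%:Z < y * l%:Z + j%:Z) = (x < y) || ((x == y) && (i < j)%N).
Proof.
move=> il jl; case: (ltgtP x y) => xy /=.
- by apply/idP; nia.
- by apply/negbTE; nia.
- by subst; lia.
Qed.

Section GapsBelowMax.

Variables (l : nat) (a : 'I_l -> int).

Lemma inXE (r : int) (i : 'I_l) : inX a (r * l%:Z + i%:Z) = (r <= a i).
Proof.
have il := ltn_ord i; apply/existsP/idP => [[j /andP [/eqP mod0 le_ra]] | le_ra].
- have ij : i = j.
    move: mod0; rewrite -addrA modzMDl => /dvdz_mod0P; rewrite dvdzE => dvd_ij.
    apply: val_inj => /=; have jl := ltn_ord j.
    have [ij0|pos_ij] := posnP `|i%:Z - j%:Z|%N; first lia.
    by have := dvdn_leq pos_ij dvd_ij; lia.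
  by move: le_ra; rewrite -ij addrK mulzK //; lia.
- by exists i; rewrite addrK modzMl mulzK ?eqxx ?le_ra //; lia.
Qed.

Lemma inX_le (x : int) : inX a x -> exists j : 'I_l, x <= a j * l%:Z + j%:Z.
Proof.
case/existsP=> j /andP [/eqP mod0 le_xa]; exists j.
have := divz_eq (x - j%:Z) l%:Z; rewrite mod0 addr0 => x_eq.
have -> : x = ((x - j%:Z) %/ l%:Z)%Z * l%:Z + j%:Z by rewrite -x_eq; lia.
by nia.
Qed.

Lemma gaps_below_le (x y : int) : x <= y -> (gaps_below a x <= gaps_below a y)%N.
Proof.
move=> xy; apply: sub_count => z /= /andP [zx ->]; rewrite andbT; lia.
Qed.

Let B := bound a.

Lemma abs_lt_bound (i : 'I_l) : (`|a i| < B)%N.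
Proof. by rewrite /B /bound (bigD1 i) //=; lia. Qed.

Lemma count_window (p : pred int) :
  count p (window a) =
  (\sum_(i < l) count (fun r => p ((r%:Z - B%:Z) * l%:Z + i%:Z)%R) (iota 0 (2 * B)))%N.
Proof.
rewrite /window count_map count_iota_mul.
apply: eq_bigr => i _; apply: eq_count => r /=.
by congr p; lia.
Qed.

Variable J : 'I_l.
Hypothesis J_max : forall i : 'I_l, a i * l%:Z + i%:Z <= a J * l%:Z + J%:Z.

Let m := a J * l%:Z + J%:Z.

Lemma gaps_in_residue (i : 'I_l) :
  (count (fun r => ((r%:Z - B%:Z) * l%:Z + i%:Z < m) && ~~ inX a ((r%:Z - B%:Z) * l%:Z + i%:Z))
         (iota 0 (2 * B)%N))%:Z
  = a J - a i - (J < i)%N%:Z.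
Proof.
have : ~~ (m < a i * l%:Z + i%:Z) by rewrite -leNgt J_max.
rewrite ltz_mulD // => iJ.
(* r l + i < m iff r <= a_J - [J <= i]; shifting by B makes all bounds natural. *)
have iB := abs_lt_bound i; have JB := abs_lt_bound J.
rewrite (@eq_count _ _ (fun r => (`|(a i + B%:Z)%R| < r <= `|(a J + B%:Z)%R| - (J <= i))%N)).
  rewrite count_iota_itv; case: (eqVneq i J) => [->|neq_iJ]; first lia.
  have : (i : nat) != J by apply: contra_neq neq_iJ; apply: val_inj.
  lia.
by move=> r /=; rewrite inXE ltz_mulD //; lia.
Qed.

Lemma gaps_below_max : \sum_(i < l) a i = 0 ->
  (gaps_below a m)%:Z = a J * l%:Z - (l - J.+1)%N%:Z.
Proof.
move=> sum_a0.
rewrite /gaps_below count_window (big_morph Posz PoszD (erefl 0%:Z)).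
under eq_bigr => i _ do rewrite gaps_in_residue.
rewrite !sumrB sum_a0 sumr_const card_ord -(big_morph Posz PoszD (erefl 0%:Z)) sum_ord_gt.
by rewrite subr0 -mulr_natr natz.
Qed.

Lemma top_in_window : m \in window a.
Proof.
have Jl := ltn_ord J; have JB := abs_lt_bound J.
apply/mapP; exists (absz (m + (B * l)%N%:Z)); last by rewrite /m; nia.
by rewrite mem_iota /m; nia.
Qed.

Lemma largest_part_pi_l : largest_part (pi_l a) = gaps_below a m.
Proof.
rewrite /largest_part /pi_l head_sort_geq_pos big_map big_filter.
apply/eqP; rewrite eqn_leq; apply/andP; split.
- apply/bigmax_leqP_seq => x _ /inX_le [i le_xi].
  by apply: gaps_below_le; apply: le_trans le_xi (J_max i).
- by apply: (leq_bigmax_seq m top_in_window); rewrite /m inXE.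
Qed.

End GapsBelowMax.

Theorem mainTheorem8 (l k : nat) (lam : seq nat) (a : 'I_l -> int) :
  (2 <= l)%N ->
  is_partition lam -> is_core l lam -> largest_part lam = k ->
  \sum_(j < l) a j = 0 -> pi_l a = lam ->
  forall j : 'I_l, (j : nat) = ((k + l - 1) %% l)%N ->
  a j = (ceil_div k l)%:Z.
Proof.
move=> l_ge2 _ _ k_def sum_a0 pi_a j j_eq.
have l_gt0 : (0 < l)%N by lia.
have [J _ J_max] := @arg_maxP _ _ _ (Ordinal l_gt0) xpredT
  (fun i : 'I_l => a i * l%:Z + i%:Z) isT.
have {}J_max i : a i * l%:Z + i%:Z <= a J * l%:Z + J%:Z by exact: J_max.
have := gaps_below_max J_max sum_a0; rewrite -largest_part_pi_l // pi_a k_def => k_eq.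
have Jl := ltn_ord J.
have aJ_ge0 : 0 <= a J by nia.
have kJ : (k + l - 1 = `|a J|%N * l + J)%N by nia.
have -> : j = J by apply: val_inj; rewrite /= j_eq kJ modnMDl modn_small.
rewrite /ceil_div (_ : k + l.-1 = `|a J|%N * l + J)%N; last by lia.
by rewrite divnMDl // divn_small // addn0; lia.
Qed.
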